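(* Let $k$ be a positive integer and let $T$ be a semi-complete digraph with $n$ vertices that admits an ordering $(v_1,\dots,v_n)$ of its vertices of width at most $k$. Let $T'$ be the transitive tournament on the same vertex set with $(v_i,v_j)\in E(T')$ iff $i<j$. Then every $k$-cut of $T$ is a $2k(1+\ln 2k)$-cut of $T'$.
   Context: A simple digraph (no loops, no multiple arcs) $T$ is semi-complete if for every pair of distinct vertices $v,w$ at least one of $(v,w),(w,v)$ is an arc. The width of an ordering $(v_1,\dots,v_n)$ of $V(T)$ is $\max_{1\le t\le n-1}|E(\{v_{t+1},\dots,v_n\},\{v_1,\dots,v_t\})|$, where $E(A,B)$ is the set of arcs with tail in $A$ and head in $B$. A $d$-cut of a digraph $T$ (for a real $d\ge0$) is an ordered partition $(X,Y)$ of $V(T)$ (either part may be empty) such that there are at most $d$ arcs $(u,v)\in E(T)$ with $u\in Y$ and $v\in X$. *)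

From mathcomp Require Import all_boot.
From Stdlib Require Import Reals.
Set Implicit Arguments. Unset Strict Implicit. Unset Printing Implicit Defensive.

(* A digraph on a finite vertex type V is an arc relation E : rel V
   (multiple arcs are impossible); simple = no loops. *)
Definition simple_digraph (V : finType) (E : rel V) : Prop :=
  forall v, ~~ E v v.

Definition semi_complete (V : finType) (E : rel V) : Prop :=
  simple_digraph E /\ forall v w : V, v != w -> E v w || E w v.

Definition arcs_from (V : finType) (E : rel V) (A B : {set V}) : {set V * V} :=
  [set p : V * V | [&& E p.1 p.2, p.1 \in A & p.2 \in B]].

Definition is_ordering (V : finType) (s : seq V) : Prop := perm_eq s (enum V).

Definition width (V : finType) (E : rel V) (s : seq V) : nat :=
  \max_(1 <= t < size s)
     #|arcs_from E [set x in drop t s] [set x in take t s]|.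

Definition trans_tournament (V : eqType) (s : seq V) : rel V :=
  fun u v => index u s < index v s.

Definition is_dcut (V : finType) (E : rel V) (X Y : {set V}) (d : R) : Prop :=
  [/\ [disjoint X & Y], X :|: Y = setT &
      (INR #|arcs_from E Y X| <= d)%R].

From mathcomp Require Import all_boot.
From Stdlib Require Import Reals Lra.

Set Implicit Arguments.
Unset Strict Implicit.

(* Let s = (v_1,...,v_n) be an ordering of width w of a semi-complete digraph
   T = (V, E), let T' be the transitive tournament of s, and let (X, Y) be a
   partition with c arcs of T from Y to X.  Arcs of T' from Y to X are pairs
   y <_s x with y in Y, x in X, so their number is the sum over x in X of
   |earlier(x)|, the number of y in Y before x.  Let later(x) be the set of
   x' in X not before x.  Every pair (y, x') in earlier(x) x later(x) is, by
   semi-completeness, either an arc of T from Y to X or the reverse of an arc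
   of T crossing the cut of s at x backwards; hence
   |earlier(x)| * |later(x)| <= c + w.  The sizes |later(x)| are pairwise
   distinct positive integers, so with d = c + w the count of back arcs of T'
   is at most  sum_{r=1}^{d} floor(d / r) <= d * H_d <= d * (1 + ln d). *)

Fixpoint harmonic (m : nat) : R :=
  match m with 0 => 0%R | S p => (harmonic p + / INR (S p))%R end.

Lemma ln_le_sub1 (u : R) : (0 < u)%R -> (ln u <= u - 1)%R.
Proof.
move=> u_gt0; have := exp_ineq1_le (ln u); rewrite exp_ln //; lra.
Qed.

(* H_m <= 1 + ln m: the step 1/(m+1) is at most ln(m+1) - ln m, because
   ln(m/(m+1)) <= m/(m+1) - 1 = -1/(m+1). *)
Lemma harmonic_le_ln (m : nat) : 0 < m -> (harmonic m <= 1 + ln (INR m))%R.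
Proof.
elim: m => [//|[|m] IHm] _; first by rewrite /= ln_1; lra.
have {}IHm := IHm isT.
rewrite [harmonic _]/= -/(harmonic m.+1).
have a_gt0 : (0 < INR m.+1)%R by apply: lt_0_INR; apply/ltP.
have b_def : INR m.+2 = (INR m.+1 + 1)%R by rewrite S_INR.
have ratio_gt0 : (0 < INR m.+1 / INR m.+2)%R by apply: Rdiv_lt_0_compat; lra.
have ln_split : ln (INR m.+1) = (ln (INR m.+2) + ln (INR m.+1 / INR m.+2))%R.
  by rewrite -ln_mult; [congr ln; field|..]; lra.
have ratio_sub1 : (INR m.+1 / INR m.+2 - 1 = - / INR m.+2)%R.
  by rewrite b_def; field; lra.
have := ln_le_sub1 ratio_gt0.
set q := (INR m.+1 / INR m.+2)%R in ln_split ratio_sub1 *.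
set ib := (/ INR m.+2)%R in ratio_sub1 *; lra.
Qed.

Lemma sum_floor_div_le_harmonic (a N : nat) :
  (INR (\sum_(1 <= r < N.+1) a %/ r) <= INR a * harmonic N)%R.
Proof.
elim: N => [|N IHN]; first by rewrite big_geq // Rmult_0_r; right.
rewrite big_nat_recr //= -plusE plus_INR Rmult_plus_distr_l.
apply: Rplus_le_compat => //.
have r_gt0 : (0 < INR N.+1)%R by apply: lt_0_INR; apply/ltP.
apply: (Rmult_le_reg_r (INR N.+1)) => //.
rewrite Rmult_assoc Rinv_l; last by apply: Rgt_not_eq.
rewrite Rmult_1_r -mult_INR; apply: le_INR; apply/leP; exact: leq_divM.
Qed.

Lemma floor_harmonic_le_ln (a : nat) : 0 < a ->
  (INR (\sum_(1 <= r < a.+1) a %/ r) <= INR a * (1 + ln (INR a)))%R.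
Proof.
move=> a_gt0; apply: Rle_trans (sum_floor_div_le_harmonic a a) _.
apply: Rmult_le_compat_l; [exact: pos_INR | exact: harmonic_le_ln].
Qed.

(* If f takes pairwise distinct positive values on X, then the floors a/f(x)
   sum to at most sum_{r=1}^{a} floor(a/r): terms with f(x) > a vanish, and
   the remaining values f(x) form a subset of {1,...,a}. *)
Lemma sum_div_distinct (T : finType) (X : {set T}) (f : T -> nat) (a : nat) :
  {in X &, injective f} -> (forall x, x \in X -> 0 < f x) ->
  \sum_(x in X) a %/ f x <= \sum_(1 <= r < a.+1) a %/ r.
Proof.
move=> f_inj f_gt0.
rewrite (bigID (fun x => f x <= a)) /= [X in _ + X]big1 ?addn0; last first.
  by move=> x /andP [_]; rewrite -ltnNge => /divn_small.
rewrite -big_enum_cond -big_filter -(big_map f xpredT (fun r => a %/ r)).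
apply: (uniq_sub_le_big (le := leq)) => //.
- by move=> m n; apply: leq_addr.
- rewrite map_inj_in_uniq; first exact/filter_uniq/enum_uniq.
  move=> x y; rewrite !(mem_filter (fun i => f i <= a)) !mem_enum.
  by move=> /andP [_ xX] /andP [_ yX]; apply: f_inj.
- exact: iota_uniq.
- move=> r /mapP [x]; rewrite (mem_filter (fun i => f i <= a)) mem_enum => /andP [fx_le xX] ->.
  by rewrite mem_index_iota f_gt0 // ltnS.
Qed.

Section OrderedVertices.

Variables (V : finType) (s : seq V).

Definition earlier (Y : {set V}) (x : V) : {set V} :=
  [set y in Y | index y s < index x s].

Definition later (X : {set V}) (x : V) : {set V} :=
  [set x' in X | index x s <= index x' s].

Lemma cut_le_width (E : rel V) (t : nat) : 0 < t < size s ->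
  #|arcs_from E [set z in drop t s] [set z in take t s]| <= width E s.
Proof. by move=> t_range; apply: leq_bigmax_seq; rewrite ?mem_index_iota. Qed.

Lemma card_trans_arcs (X Y : {set V}) :
  #|arcs_from (trans_tournament s) Y X| = \sum_(x in X) #|earlier Y x|.
Proof.
rewrite -sum1_card (partition_big snd (mem X)) /=; last first.
  by move=> [y x]; rewrite inE => /and3P [].
apply: eq_bigr => x xX.
have pair_inj : injective (fun y : V => (y, x)) by move=> y1 y2 [].
rewrite sum1dep_card -(card_imset (earlier Y x) pair_inj).
congr #|pred_of_set _|.
apply/setP => -[y x']; rewrite !inE /=.
apply/idP/imsetP => [/andP [/and3P [y_before yY x'X] /eqP x'_eq]|[y' y'_earlier [-> ->]]].
  by exists y; [rewrite inE yY -x'_eq | rewrite x'_eq].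
by move: y'_earlier; rewrite !inE eqxx xX !andbT andbC.
Qed.

Hypothesis s_ord : is_ordering s.

Lemma mem_ordering (v : V) : v \in s.
Proof. by rewrite (perm_mem s_ord) mem_enum. Qed.

Lemma mem_drop_ordering (t : nat) (v : V) : (v \in drop t s) = (t <= index v s).
Proof.
have s_uniq : uniq s by rewrite (perm_uniq s_ord) enum_uniq.
rewrite leqNgt -(in_take _ (mem_ordering v)).
move: (mem_ordering v) s_uniq; rewrite -{1 2}(cat_take_drop t s) mem_cat cat_uniq.
case: (boolP (v \in take t s)) => [v_take _ /and3P [_ disj _] | _ v_drop _] //=.
apply/negbTE/negP => v_drop; move/hasPn: disj => /(_ v v_drop).
by rewrite v_take.
Qed.

(* The key estimate: a pair (y, x') with y before x and x' not before x is
   either an arc of E from Y to X, or its reverse crosses the cut of s at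
   position index x backwards (if x is first, no y precedes it). *)
Lemma earlier_later_le (E : rel V) (X Y : {set V}) (x : V) :
  (forall v w : V, v != w -> E v w || E w v) ->
  #|earlier Y x| * #|later X x| <= #|arcs_from E Y X| + width E s.
Proof.
move=> E_total.
have [x_first|x_pos] := posnP (index x s).
  suff -> : earlier Y x = set0 by rewrite cards0.
  by apply/setP => y; rewrite !inE x_first ltn0 andbF.
set t := index x s.
have t_lt : t < size s by rewrite index_mem mem_ordering.
pose cut := arcs_from E [set z in drop t s] [set z in take t s].
have pairs_sub : setX (earlier Y x) (later X x)
    \subset arcs_from E Y X :|: [set (p.2, p.1) | p in cut].
  apply/subsetP => -[y x']; rewrite !inE /= => /andP [/andP [yY y_lt] /andP [x'X x'_ge]].
  have y_ne_x' : y != x'.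
    by apply: contraTneq y_lt => ->; rewrite -leqNgt.
  case/orP: (E_total _ _ y_ne_x') => [E_yx'|E_x'y]; first by rewrite E_yx' yY x'X.
  apply/orP; right; apply/imsetP; exists (x', y) => //.
  rewrite !inE /= E_x'y mem_drop_ordering x'_ge.
  by rewrite (in_take _ (mem_ordering y)).
rewrite -cardsX; apply: leq_trans (subset_leq_card pairs_sub) _.
apply: leq_trans (leq_card_setU _ _) (leq_add (leqnn _) _).
apply: leq_trans (leq_imset_card _ _) _.
by apply: cut_le_width; rewrite x_pos t_lt.
Qed.

Lemma later_gt0 (X : {set V}) (x : V) : x \in X -> 0 < #|later X x|.
Proof. by move=> xX; apply/card_gt0P; exists x; rewrite inE xX leqnn. Qed.

(* The sets later X x shrink strictly along s, so their sizes are distinct. *)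
Lemma later_card_inj (X : {set V}) : {in X &, injective (fun x => #|later X x|)}.
Proof.
have later_lt x1 x2 : x1 \in X -> index x1 s < index x2 s ->
    #|later X x2| < #|later X x1|.
  move=> x1X lt12; apply/proper_card/properP; split.
    apply/subsetP => z; rewrite !inE => /andP [-> le2z].
    exact: leq_trans (ltnW lt12) le2z.
  by exists x1; rewrite !inE x1X //= -ltnNge.
move=> x1 x2 x1X x2X card_eq; case: (ltngtP (index x1 s) (index x2 s)).
- by move/(later_lt _ _ x1X); rewrite card_eq ltnn.
- by move/(later_lt _ _ x2X); rewrite card_eq ltnn.
- exact: index_inj (mem_ordering x1) (mem_ordering x2).
Qed.

Lemma trans_back_arcs_le (E : rel V) (X Y : {set V}) (d : nat) :
  (forall v w : V, v != w -> E v w || E w v) ->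
  #|arcs_from E Y X| + width E s <= d ->
  #|arcs_from (trans_tournament s) Y X| <= \sum_(1 <= r < d.+1) d %/ r.
Proof.
move=> E_total le_d.
rewrite card_trans_arcs.
apply: leq_trans (sum_div_distinct d (@later_card_inj X) (@later_gt0 X)).
apply: leq_sum => x xX; rewrite leq_divRL ?later_gt0 //.
exact: leq_trans (earlier_later_le X Y x E_total) le_d.
Qed.
End OrderedVertices.

(* A k-cut (X, Y) of T has at most k back arcs and s has width at most k, so
   the bound applies with d = 2k. *)
Theorem mainTheorem11 (V : finType) (E : rel V) (k : nat) (s : seq V) :
  0 < k ->
  semi_complete E ->
  is_ordering s ->
  width E s <= k ->
  forall X Y : {set V},
    is_dcut E X Y (INR k) ->
    is_dcut (trans_tournament s) X Y
      (2 * INR k * (1 + ln (2 * INR k)))%R.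
Proof.
move=> k_gt0 [_ E_total] s_ord width_le X Y [XY_disj XY_cover back_le].
split=> //.
have back_le_k : #|arcs_from E Y X| <= k by apply/leP/INR_le.
have INR_2k : INR (2 * k) = (2 * INR k)%R by rewrite -multE mult_INR.
have two_k_gt0 : 0 < 2 * k by rewrite muln_gt0.
rewrite -INR_2k; apply: (Rle_trans _ _ _ _ (floor_harmonic_le_ln two_k_gt0)).
apply/le_INR/leP/(trans_back_arcs_le s_ord E_total).
by rewrite mul2n -addnn leq_add.
Qed.
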